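(* For every $\alpha$-formula $\alpha$ with components $\alpha_1,\alpha_2$, the formula $\alpha\leftrightarrow\alpha_1\wedge\alpha_2$ is valid (where, if $\alpha$ has only one component, $\alpha_1\wedge\alpha_2$ means $\alpha_1$), and for every $\beta$-formula $\beta$ with components $\beta_1,\beta_2$, the formula $\beta\leftrightarrow\beta_1\vee\beta_2$ is valid.
   Context: $\tau$PDL syntax: formulas $\varphi::=p\mid\neg\varphi\mid\forall A.\varphi\mid\mathsf C_\imath A$, programs $A::=a\mid\varphi\mid\varphi\Rightarrow\varphi\mid AA\mid A+A\mid A^*$ ($p$ atomic formula, $a$ atomic program, $\imath$ agent), interpreted in $\mathcal L$-models by the standard relational semantics of $\tau$PDL: $\forall A.\varphi$ is the box $[A]\varphi$, tests $\varphi$ denote $\{(w,w):w\models\varphi\}$, $\to_{AB}=\to_A\circ\to_B$, $\to_{A+B}=\to_A\cup\to_B$, $\to_{A^*}$ is the reflexive-transitive closure, $\to_{\varphi\Rightarrow\psi}=\bigcup\{\to_A: A\in\Sigma^+,\forall w\models\varphi\,\forall w'(w\to_Aw'\Rightarrow w'\models\psi)\}$ with $\Sigma^+$ the finite nonempty compositions of atomic programs, tests and $\varphi\Rightarrow\psi$ terms; capabilities: $w\models\mathsf C_\imath a$ iff $\to_a\subseteq\imath^M(w)$, $\mathsf C_\imath\varphi$ always true, $w\models\mathsf C_\imath(\varphi\Rightarrow\psi)$ iff $\to_{\varphi\Rightarrow\psi}\subseteq\imath^M(w)$, $\mathsf C_\imath(AB)$ true at $w$ iff $w\models\mathsf C_\imath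 A$ and every $A$-successor satisfies $\mathsf C_\imath B$, $[\![\mathsf C_\imath(A+B)]\!]=[\![\mathsf C_\imath A]\!]\cap[\![\mathsf C_\imath B]\!]$, $[\![\mathsf C_\imath A^*]\!]=\bigcup\{[\![\varphi]\!]:[\![\varphi]\!]\subseteq[\![\mathsf C_\imath A]\!]\cap[\![\forall A.\varphi]\!]\}$; and the normality condition $\imath^M(w)=\bigcup\{\to_{\varphi\Rightarrow\psi}:w\models\mathsf C_\imath(\varphi\Rightarrow\psi)\}\cup\bigcup\{\to_a:w\models\mathsf C_\imath a\}$. $\mathsf{tt}$ is a tautology, $\Omega:=\mathsf{tt}\Rightarrow\mathsf{tt}$; $\wedge,\vee$ are the usual abbreviations. $\alpha$-formulas and their components $(\alpha_1;\alpha_2)$: $\neg\neg\varphi:(\varphi)$; $\neg\forall\psi.\varphi:(\neg\varphi;\psi)$; $\forall AB.\varphi:(\forall A.\forall B.\varphi)$; $\neg\forall AB.\varphi:(\neg\forall A.\forall B.\varphi)$; $\forall(A+B).\varphi:(\forall A.\varphi;\forall B.\varphi)$; $\forall A^*.\varphi:(\varphi;\forall A.\forall A^*.\varphi)$; $\mathsf C_\imath(AB):(\mathsf C_\imath A;\forall A.\mathsf C_\imath B)$; $\mathsf C_\imath(A+B):(\mathsf C_\imath A;\mathsf C_\imath B)$; $\mathsf C_\imath(A^* ):(\forall A^*.\mathsf C_\imath A)$; $\neg\mathsf C_\imath(A^* ):(\neg\forall A^*.\mathsf C_\imath A)$. $\beta$-formulas and components $(\beta_1;\beta_2)$: $\forall\psi.\varphi:(\neg\psi;\varphi)$;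 $\forall(\varphi\Rightarrow\psi).\vartheta:(\varphi\wedge\forall\Omega^*.\forall\psi.\vartheta;\ \forall\Omega^*.\vartheta)$; $\neg\forall(\varphi\Rightarrow\psi).\vartheta:(\neg\forall(\neg\varphi).\forall\Omega.\vartheta;\ \neg\forall\Omega.\forall\psi.\vartheta)$; $\neg\forall(A+B).\varphi:(\neg\forall A.\varphi;\neg\forall B.\varphi)$; $\neg\forall A^*.\varphi:(\neg\varphi;\neg\forall A.\forall A^*.\varphi)$; $\neg\mathsf C_\imath(AB):(\neg\mathsf C_\imath A;\neg\forall A.\mathsf C_\imath B)$; $\neg\mathsf C_\imath(A+B):(\neg\mathsf C_\imath A;\neg\mathsf C_\imath B)$. A formula is valid if true at every state of every $\mathcal L$-model. *)

From Stdlib Require Import Relations.Relation_Operators.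

Definition atom := nat.
Definition aprog := nat.
Definition agent := nat.

Inductive form : Type :=
| Atom : atom -> form
| Neg : form -> form
| Box : prog -> form -> form
| Cap : agent -> prog -> form
with prog : Type :=
| PAtom : aprog -> prog
| Test : form -> prog
| Arrow : form -> form -> prog
| Seq : prog -> prog -> prog
| Choice : prog -> prog -> prog
| Star : prog -> prog.

Definition Impl (phi psi : form) : form := Box (Test phi) psi.
Definition And (phi psi : form) : form := Neg (Impl phi (Neg psi)).
Definition Or (phi psi : form) : form := Impl (Neg phi) psi.
Definition Iff (phi psi : form) : form := And (Impl phi psi) (Impl psi phi).
Definition tt : form := Impl (Atom 0) (Atom 0).
Definition Omega : prog := Arrow tt tt.

Inductive SigmaPlus : prog -> Prop :=
| SP_atom a : SigmaPlus (PAtom a)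
| SP_test phi : SigmaPlus (Test phi)
| SP_arrow phi psi : SigmaPlus (Arrow phi psi)
| SP_seq A B : SigmaPlus A -> SigmaPlus B -> SigmaPlus (Seq A B).

(* An L-model: states W, a truth relation, the program relations ->_A and the
   agent capability relations i^M(w), subject to the (non-structural, hence
   axiomatically imposed) clauses of the tauPDL semantics and normality. *)
Record Lmodel : Type := {
  W : Type;
  sat : W -> form -> Prop;
  rel : prog -> W -> W -> Prop;
  agrel : agent -> W -> W -> W -> Prop;
  sat_neg : forall w phi, sat w (Neg phi) <-> ~ sat w phi;
  sat_box : forall w A phi,
      sat w (Box A phi) <-> (forall w', rel A w w' -> sat w' phi);
  sat_cap_atom : forall w i a,
      sat w (Cap i (PAtom a)) <-> (forall u v, rel (PAtom a) u v -> agrel i w u v);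
  sat_cap_test : forall w i phi, sat w (Cap i (Test phi));
  sat_cap_arrow : forall w i phi psi,
      sat w (Cap i (Arrow phi psi)) <->
      (forall u v, rel (Arrow phi psi) u v -> agrel i w u v);
  sat_cap_seq : forall w i A B,
      sat w (Cap i (Seq A B)) <->
      (sat w (Cap i A) /\ forall w', rel A w w' -> sat w' (Cap i B));
  sat_cap_choice : forall w i A B,
      sat w (Cap i (Choice A B)) <-> (sat w (Cap i A) /\ sat w (Cap i B));
  sat_cap_star : forall w i A,
      sat w (Cap i (Star A)) <->
      (exists phi, sat w phi /\
         forall v, sat v phi -> sat v (Cap i A) /\ sat v (Box A phi));
  rel_test : forall phi w w', rel (Test phi) w w' <-> (w = w' /\ sat w phi);
  rel_arrow : forall phi psi w w',
      rel (Arrow phi psi) w w' <->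
      (exists A, SigmaPlus A /\
         (forall v, sat v phi -> forall v', rel A v v' -> sat v' psi) /\
         rel A w w');
  rel_seq : forall A B w w',
      rel (Seq A B) w w' <-> (exists u, rel A w u /\ rel B u w');
  rel_choice : forall A B w w',
      rel (Choice A B) w w' <-> (rel A w w' \/ rel B w w');
  rel_star : forall A w w',
      rel (Star A) w w' <-> clos_refl_trans W (rel A) w w';
  normality : forall i w u v,
      agrel i w u v <->
      ((exists phi psi, sat w (Cap i (Arrow phi psi)) /\ rel (Arrow phi psi) u v)
       \/ (exists a, sat w (Cap i (PAtom a)) /\ rel (PAtom a) u v))
}.

Definition valid (phi : form) : Prop :=
  forall (M : Lmodel) (w : W M), sat M w phi.

(* alpha-formulas: alpha, first component, optional second component *)
Inductive IsAlpha : form -> form -> option form -> Prop :=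
| al_negneg phi : IsAlpha (Neg (Neg phi)) phi None
| al_negtest psi phi : IsAlpha (Neg (Box (Test psi) phi)) (Neg phi) (Some psi)
| al_seq A B phi : IsAlpha (Box (Seq A B) phi) (Box A (Box B phi)) None
| al_negseq A B phi :
    IsAlpha (Neg (Box (Seq A B) phi)) (Neg (Box A (Box B phi))) None
| al_choice A B phi :
    IsAlpha (Box (Choice A B) phi) (Box A phi) (Some (Box B phi))
| al_star A phi :
    IsAlpha (Box (Star A) phi) phi (Some (Box A (Box (Star A) phi)))
| al_capseq i A B :
    IsAlpha (Cap i (Seq A B)) (Cap i A) (Some (Box A (Cap i B)))
| al_capchoice i A B :
    IsAlpha (Cap i (Choice A B)) (Cap i A) (Some (Cap i B))
| al_capstar i A :
    IsAlpha (Cap i (Star A)) (Box (Star A) (Cap i A)) None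
| al_negcapstar i A :
    IsAlpha (Neg (Cap i (Star A))) (Neg (Box (Star A) (Cap i A))) None.

Definition conj_comp (a1 : form) (a2 : option form) : form :=
  match a2 with None => a1 | Some a => And a1 a end.

Inductive IsBeta : form -> form -> form -> Prop :=
| be_test psi phi : IsBeta (Box (Test psi) phi) (Neg psi) phi
| be_arrow phi psi th :
    IsBeta (Box (Arrow phi psi) th)
      (And phi (Box (Star Omega) (Box (Test psi) th)))
      (Box (Star Omega) th)
| be_negarrow phi psi th :
    IsBeta (Neg (Box (Arrow phi psi) th))
      (Neg (Box (Test (Neg phi)) (Box Omega th)))
      (Neg (Box Omega (Box (Test psi) th)))
| be_negchoice A B phi :
    IsBeta (Neg (Box (Choice A B) phi)) (Neg (Box A phi)) (Neg (Box B phi))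
| be_negstar A phi :
    IsBeta (Neg (Box (Star A) phi)) (Neg phi) (Neg (Box A (Box (Star A) phi)))
| be_negcapseq i A B :
    IsBeta (Neg (Cap i (Seq A B))) (Neg (Cap i A)) (Neg (Box A (Cap i B)))
| be_negcapchoice i A B :
    IsBeta (Neg (Cap i (Choice A B))) (Neg (Cap i A)) (Neg (Cap i B)).

(* The proof is purely semantic and is organised
   around a few facts about the program relations of an L-model:
   - the clauses for the propositional abbreviations (Impl, And, Or, Iff);
   - the fixpoint unfolding of [A*]phi, and the invariant characterisation
     of C_i(A^* ), which is thereby equivalent to [A*] C_i A;
   - the universal program Omega = tt => tt relates exactly the pairs
     related by some program of Sigma^+; in particular Omega* = Omega, and
     phi => psi relates exactly the Omega-pairs (w, w') with phi at w
     implying psi at w'.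
   Each alpha case is then one of these equivalences, and each beta case of
   the form ~X follows from an alpha-style decomposition of X by De Morgan. *)
From Stdlib Require Import Relations.Relation_Operators Relations.Operators_Properties.
From Stdlib Require Import Classical Setoid.

Section Semantics.
Variable M : Lmodel.
Notation sat := (sat M).
Notation rel := (rel M).

Lemma sat_test_box w p q : sat w (Box (Test p) q) <-> (sat w p -> sat w q).
Proof.
  rewrite sat_box; split.
  - intros H Hp; apply H, rel_test; auto.
  - intros H w' Hr; apply rel_test in Hr as [<- Hp]; auto.
Qed.

Lemma sat_and w p q : sat w (And p q) <-> sat w p /\ sat w q.
Proof. unfold And, Impl; rewrite sat_neg, sat_test_box, sat_neg; tauto. Qed.

Lemma sat_or w p q : sat w (Or p q) <-> sat w p \/ sat w q.
Proof.
  unfold Or, Impl; rewrite sat_test_box, sat_neg.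
  split; [intro H; apply imply_to_or in H|]; tauto.
Qed.

Lemma sat_iff w p q : sat w (Iff p q) <-> (sat w p <-> sat w q).
Proof. unfold Iff, Impl; rewrite sat_and, !sat_test_box; tauto. Qed.

Lemma sat_tt w : sat w tt.
Proof. unfold tt, Impl; rewrite sat_test_box; auto. Qed.

Lemma sat_neg_of_conj w x q r :
  (sat w x <-> sat w q /\ sat w r) ->
  (sat w (Neg x) <-> sat w (Or (Neg q) (Neg r))).
Proof.
  intro E; rewrite sat_or, !sat_neg, E.
  split; [apply not_and_or | tauto].
Qed.

Lemma box_seq w A B phi : sat w (Box (Seq A B) phi) <-> sat w (Box A (Box B phi)).
Proof.
  rewrite !sat_box; split.
  - intros H u Hu; rewrite sat_box; intros w' Hw'; apply H, rel_seq; eauto.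
  - intros H w' Hr; apply rel_seq in Hr as [u [Hu Hw']].
    specialize (H u Hu); rewrite sat_box in H; auto.
Qed.

Lemma box_choice w A B phi :
  sat w (Box (Choice A B) phi) <-> sat w (Box A phi) /\ sat w (Box B phi).
Proof.
  rewrite !sat_box; split.
  - intro H; split; intros; apply H, rel_choice; auto.
  - intros [HA HB] w' Hr; apply rel_choice in Hr as [|]; auto.
Qed.

Lemma box_star_unfold w A phi :
  sat w (Box (Star A) phi) <-> sat w phi /\ sat w (Box A (Box (Star A) phi)).
Proof.
  rewrite !sat_box; split.
  - intro H; split; [apply H, rel_star, rt_refl|].
    intros u Hu; rewrite sat_box; intros w' Hw'; apply H, rel_star.
    apply rt_trans with u; [apply rt_step | apply rel_star]; auto.
  - intros [Hnow Hstep] w' Hr; apply rel_star, clos_rt_rt1n in Hr.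
    destruct Hr as [|u w' Hu Hw']; auto.
    specialize (Hstep u Hu); rewrite sat_box in Hstep.
    apply Hstep, rel_star, clos_rt1n_rt; auto.
Qed.

Lemma star_invariant A phi w :
  (forall v, sat v phi -> sat v (Box A phi)) ->
  sat w phi -> sat w (Box (Star A) phi).
Proof.
  intros Hinv Hw; rewrite sat_box; intros w' Hr; apply rel_star in Hr.
  induction Hr as [x y Hxy | | x y z _ IH1 _ IH2]; auto.
  specialize (Hinv x Hw); rewrite sat_box in Hinv; auto.
Qed.

(* The capability for A* is the capability for A along every A*-path: the
   witness invariant of C_i(A* ) may always be taken to be [A*] C_i A. *)
Lemma cap_star_box w i A :
  sat w (Cap i (Star A)) <-> sat w (Box (Star A) (Cap i A)).
Proof.
  rewrite sat_cap_star; split.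
  - intros [phi [Hw Hinv]].
    assert (Hphi : sat w (Box (Star A) phi))
      by (apply star_invariant; auto; apply Hinv).
    rewrite sat_box in *; intros w' Hr; apply Hinv, Hphi, Hr.
  - intro H; exists (Box (Star A) (Cap i A)); split; auto.
    intros v Hv; apply box_star_unfold in Hv; auto.
Qed.

Lemma cap_seq_box w i A B :
  sat w (Cap i (Seq A B)) <-> sat w (Cap i A) /\ sat w (Box A (Cap i B)).
Proof. rewrite sat_cap_seq, sat_box; tauto. Qed.

Lemma omega_rel w w' : rel Omega w w' <-> exists C, SigmaPlus C /\ rel C w w'.
Proof.
  unfold Omega; rewrite rel_arrow; split.
  - intros [C [HC [_ Hr]]]; eauto.
  - intros [C [HC Hr]]; exists C; repeat split; auto; intros; apply sat_tt.
Qed.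

(* Sigma^+ contains tests and is closed under composition, so Omega is
   reflexive and transitive: Omega* = Omega. *)
Lemma omega_star_rel w w' : rel (Star Omega) w w' <-> rel Omega w w'.
Proof.
  rewrite rel_star; split; [|apply rt_step].
  intro Hr; induction Hr as [x y Hxy | x | x y z _ IH1 _ IH2]; auto.
  - apply omega_rel; exists (Test tt); split; [constructor|].
    apply rel_test; split; auto; apply sat_tt.
  - apply omega_rel in IH1 as [C1 [HC1 R1]]; apply omega_rel in IH2 as [C2 [HC2 R2]].
    apply omega_rel; exists (Seq C1 C2); split; [constructor; auto|].
    apply rel_seq; eauto.
Qed.

Lemma box_omega_star w phi : sat w (Box (Star Omega) phi) <-> sat w (Box Omega phi).
Proof. rewrite !sat_box; split; intros H w' Hr; apply H, omega_star_rel, Hr. Qed.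

(* phi => psi relates exactly the Omega-pairs (w, w') along which phi at w
   forces psi at w': a witness program is C;psi? when phi holds at w, and
   (~phi)?;C otherwise. *)
Lemma arrow_rel phi psi w w' :
  rel (Arrow phi psi) w w' <-> rel Omega w w' /\ (sat w phi -> sat w' psi).
Proof.
  split.
  - rewrite rel_arrow; intros [C [HC [Hsound Hr]]].
    split; [apply omega_rel; eauto | intro Hphi; eapply Hsound; eauto].
  - intros [Homega Himp]; apply omega_rel in Homega as [C [HC Hr]].
    apply rel_arrow; destruct (classic (sat w phi)) as [Hphi | Hnphi].
    + exists (Seq C (Test psi)); repeat split; [repeat constructor; auto | |].
      * intros v _ v' Hv; apply rel_seq in Hv as [u [_ Hu]].
        apply rel_test in Hu as [<- Hpsi]; auto.
      * apply rel_seq; exists w'; split; auto; apply rel_test; auto.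
    + exists (Seq (Test (Neg phi)) C); repeat split; [repeat constructor; auto | |].
      * intros v Hv v' Hv'; apply rel_seq in Hv' as [u [Hu _]].
        apply rel_test in Hu as [<- Hn]; rewrite sat_neg in Hn; contradiction.
      * apply rel_seq; exists w; split; auto; apply rel_test; rewrite sat_neg; auto.
Qed.

(* Alpha-style decomposition of [phi => psi]theta: if phi fails now, every
   Omega-successor is reached; the Omega-successors satisfying psi are
   always reached. *)
Lemma box_arrow_split phi psi th w :
  sat w (Box (Arrow phi psi) th) <->
  sat w (Box (Test (Neg phi)) (Box Omega th)) /\ sat w (Box Omega (Box (Test psi) th)).
Proof.
  rewrite sat_test_box, sat_neg, !sat_box.
  setoid_rewrite sat_test_box; setoid_rewrite (arrow_rel phi psi).
  split.
  - intro H; split; [intros Hnphi w' Hw'|intros w' Hw' Hpsi]; apply H; tauto.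
  - intros [Hn Hp] w' [Hw' Himp].
    destruct (classic (sat w phi)); [apply Hp|apply Hn]; auto.
Qed.

Lemma box_omega_weaken w psi th :
  sat w (Box Omega th) -> sat w (Box Omega (Box (Test psi) th)).
Proof.
  rewrite !sat_box; intros H w' Hw'; rewrite sat_test_box; auto.
Qed.

Lemma box_arrow_disj phi psi th w :
  sat w (Box (Arrow phi psi) th) <->
  sat w (Or (And phi (Box (Star Omega) (Box (Test psi) th))) (Box (Star Omega) th)).
Proof.
  rewrite box_arrow_split, sat_or, sat_and, !box_omega_star, sat_test_box, sat_neg.
  pose proof (box_omega_weaken w psi th).
  destruct (classic (sat w phi)); tauto.
Qed.

Lemma alpha_sound a a1 a2 :
  IsAlpha a a1 a2 -> forall w, sat w a <-> sat w (conj_comp a1 a2).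
Proof.
  intros H w; destruct H; simpl; rewrite ?sat_and.
  - rewrite !sat_neg; split; [apply NNPP | tauto].
  - rewrite sat_neg, sat_test_box, sat_neg.
    split; [intro H; apply imply_to_and in H|]; tauto.
  - apply box_seq.
  - rewrite !sat_neg, box_seq; tauto.
  - apply box_choice.
  - apply box_star_unfold.
  - apply cap_seq_box.
  - apply sat_cap_choice.
  - apply cap_star_box.
  - rewrite !sat_neg, cap_star_box; tauto.
Qed.

Lemma beta_sound b b1 b2 :
  IsBeta b b1 b2 -> forall w, sat w b <-> sat w (Or b1 b2).
Proof.
  intros H w; destruct H.
  - rewrite sat_or, sat_test_box, sat_neg.
    split; [intro H; apply imply_to_or in H|]; tauto.
  - apply box_arrow_disj.
  - apply sat_neg_of_conj, box_arrow_split.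
  - apply sat_neg_of_conj, box_choice.
  - apply sat_neg_of_conj, box_star_unfold.
  - apply sat_neg_of_conj, cap_seq_box.
  - apply sat_neg_of_conj, sat_cap_choice.
Qed.

End Semantics.

Theorem mainTheorem6 :
  (forall (a a1 : form) (a2 : option form),
      IsAlpha a a1 a2 -> valid (Iff a (conj_comp a1 a2))) /\
  (forall b b1 b2 : form, IsBeta b b1 b2 -> valid (Iff b (Or b1 b2))).
Proof.
  split.
  - intros a a1 a2 H M w; apply sat_iff, alpha_sound, H.
  - intros b b1 b2 H M w; apply sat_iff, beta_sound, H.
Qed.
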